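(* Let $\hat H(w)=e^{-w}$ (discrete delay) and $\alpha,\beta\in\mathbb{R}$. If for some $\tilde\tau^*>0$ and $\omega>0$ the number $w=i\omega$ is a simple root of $\Phi(w)=0$ at $\tilde\tau=\tilde\tau^*$, then the root branch $w(\tilde\tau)$ through $i\omega$ satisfies $$\operatorname{Re}\left.\frac{dw}{d\tilde\tau}\right|_{\tilde\tau=\tilde\tau^*}=\frac{\omega^2}{\tilde\tau^*\big((1+\tilde\tau^* )^2+\omega^2\big)}>0.$$ In particular, every crossing of roots through the imaginary axis as $\tilde\tau$ increases is from left to right (so no stability switch back to stability can occur as $\tilde\tau$ increases).
   Context: For a delay-to-time-constant ratio $\tilde\tau>0$ and $\alpha,\beta\in\mathbb{R}$, the rescaled characteristic equation of the linearized coupled Wilson–Cowan system with kernel transform $\hat H$ is $$\Phi(w):=(w+\tilde\tau)^4-\alpha\,\tilde\tau^2(w+\tilde\tau)^2\hat H(w)^2+\beta\,\tilde\tau^4\hat H(w)^4=0.$$ For the Dirac (discrete) delay kernel $h(t)=\delta(t-\tau)$, $\hat H(w)=e^{-w}$. *)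

From Stdlib Require Import Reals.
From Coquelicot Require Import Coquelicot.
Open Scope R_scope.

Definition Cexp (z : C) : C :=
  (exp (Re z) * cos (Im z), exp (Re z) * sin (Im z)).

(* Kernel transform of the Dirac delay kernel h(t) = delta(t - tau): H^(w) = e^{-w}. *)
Definition Hdirac (w : C) : C := Cexp (Copp w).

Definition Phi (H : C -> C) (alpha beta t : R) (w : C) : C :=
  Cpow (w + RtoC t) 4
  - RtoC alpha * RtoC (t ^ 2) * Cpow (w + RtoC t) 2 * Cpow (H w) 2
  + RtoC beta * RtoC (t ^ 4) * Cpow (H w) 4.

Definition simple_root (f : C -> C) (w0 : C) : Prop :=
  f w0 = 0 /\ exists d : C, is_derive (K := C_AbsRing) f w0 d /\ d <> 0.

From Stdlib Require Import Reals Lra Classical.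
From Coquelicot Require Import Coquelicot.
Open Scope R_scope.

(* Write X = (w + t)^2 and Y = t^2 H(w)^2.  Then Phi = X^2 - alpha X Y + beta Y^2 is a
   binary quadratic form Q(X, Y), so along a branch of roots the ratio Y/X stays a
   root of beta r^2 - alpha r + 1 = 0 and is therefore locally stationary.  To avoid
   dividing, this is phrased through the factorisation
     X0^2 Q(X,Y) - X^2 Q(X0,Y0) = (Y X0 - Y0 X) (beta (Y X0 + Y0 X) - alpha X X0),
   which gives (Y X0 - Y0 X)'(t0) = 0 in both the simple and the double-root case.
   For the Dirac kernel this derivative factors as
     2 t0 e^(-2 w0) (w0 + t0) (w0 - t0 w'(t0) (w0 + t0 + 1)),
   so w'(t0) = w0 / (t0 (w0 + t0 + 1)), whose real part at w0 = i omega is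
   omega^2 / (t0 ((1 + t0)^2 + omega^2)) > 0.  Simplicity of the root is what
   provides a differentiable branch; the computation only uses that branch. *)

Lemma is_derive_eq {K : AbsRing} {V : NormedModule K} (f : K -> V) (x : K) (l l' : V) :
  is_derive f x l -> l = l' -> is_derive f x l'.
Proof. now intros H <-. Qed.

Lemma is_derive_C (f : R -> C) (x : R) (l : C) :
  is_derive f x l <->
  is_derive (fun t => Re (f t)) x (Re l) /\ is_derive (fun t => Im (f t)) x (Im l).
Proof.
  unfold is_derive. split.
  - intros Hf. split; eapply filterdiff_ext_lin.
    + apply (filterdiff_comp' f (fun z : C_R_NormedModule => fst z) x _
             (fun z : C_R_NormedModule => fst z) Hf).
      apply filterdiff_linear, (@is_linear_fst R_AbsRing R_NormedModule R_NormedModule).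
    + reflexivity.
    + apply (filterdiff_comp' f (fun z : C_R_NormedModule => snd z) x _
             (fun z : C_R_NormedModule => snd z) Hf).
      apply filterdiff_linear, (@is_linear_snd R_AbsRing R_NormedModule R_NormedModule).
    + reflexivity.
  - intros [Hre Him]. eapply filterdiff_ext_lin.
    + eapply filterdiff_ext;
        [| apply (filterdiff_comp'_2 _ _ (fun u v => (u, v) : C_R_NormedModule) x _ _
                   (fun u v => (u, v)) Hre Him)].
      * intros t. simpl. now destruct (f t).
      * apply filterdiff_linear. split.
        -- now intros [] [].
        -- now intros k [].
        -- exists 1. split; [lra|]. intros []. rewrite Rmult_1_l. apply Rle_refl.
    + reflexivity.
Qed.

(* [is_derive_eq] with the equation read in C, so that [ring] applies to it. *)
Lemma is_derive_Ceq (f : R -> C) (x : R) (l l' : C) :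
  is_derive f x l -> l = l' -> is_derive f x l'.
Proof. now intros Hf <-. Qed.

Lemma is_derive_Cplus (f g : R -> C) (x : R) (df dg : C) :
  is_derive f x df -> is_derive g x dg ->
  is_derive (fun t => (f t + g t)%C) x (df + dg)%C.
Proof. exact (is_derive_plus f g x df dg). Qed.

Lemma is_derive_Cminus (f g : R -> C) (x : R) (df dg : C) :
  is_derive f x df -> is_derive g x dg ->
  is_derive (fun t => (f t - g t)%C) x (df - dg)%C.
Proof. exact (is_derive_minus f g x df dg). Qed.

Lemma is_derive_Cconst (c : C) (x : R) : is_derive (fun _ : R => c) x (RtoC 0).
Proof. apply (@is_derive_const R_AbsRing _ c x). Qed.

Lemma is_derive_RtoC (r : R -> R) (x dr : R) :
  is_derive r x dr -> is_derive (fun t => RtoC (r t)) x (RtoC dr).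
Proof.
  intros Hr. apply is_derive_C.
  split; [exact Hr | exact (@is_derive_const R_AbsRing R_NormedModule 0 x)].
Qed.

Lemma is_derive_Cmult (f g : R -> C) (x : R) (df dg : C) :
  is_derive f x df -> is_derive g x dg ->
  is_derive (fun t => (f t * g t)%C) x (df * g x + f x * dg)%C.
Proof.
  rewrite !is_derive_C. intros [Hf1 Hf2] [Hg1 Hg2].
  assert (M : forall (u v : R -> R) du dv, is_derive u x du -> is_derive v x dv ->
            is_derive (fun t => u t * v t) x (du * v x + u x * dv)).
  { intros u v du dv Hu Hv. apply (is_derive_mult u v); auto. intros; apply Rmult_comm. }
  split; simpl; unfold Re, Im in *.
  - eapply is_derive_eq; [apply (is_derive_minus (fun t => _ * _) (fun t => _ * _)); apply M; eauto|].
    simpl. unfold minus, plus, opp; simpl. ring.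
  - eapply is_derive_eq; [apply (is_derive_plus (fun t => _ * _) (fun t => _ * _)); apply M; eauto|].
    simpl. unfold plus; simpl. ring.
Qed.

Lemma is_derive_Cmult_const_r (f : R -> C) (c : C) (x : R) (df : C) :
  is_derive f x df -> is_derive (fun t => (f t * c)%C) x (df * c)%C.
Proof.
  intros Hf. eapply is_derive_Ceq; [exact (is_derive_Cmult _ _ x _ _ Hf (is_derive_Cconst c x))|].
  simpl. ring.
Qed.

Lemma is_derive_Cmult_const_l (c : C) (f : R -> C) (x : R) (df : C) :
  is_derive f x df -> is_derive (fun t => (c * f t)%C) x (c * df)%C.
Proof.
  intros Hf. eapply is_derive_Ceq; [exact (is_derive_Cmult _ _ x _ _ (is_derive_Cconst c x) Hf)|].
  simpl. ring.
Qed.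

Lemma is_derive_Hdirac (w : R -> C) (x : R) (dw : C) :
  is_derive w x dw -> is_derive (fun t => Hdirac (w t)) x (- Hdirac (w x) * dw)%C.
Proof.
  rewrite !is_derive_C. intros [Hre Him].
  assert (Comp : forall (F : R -> R) dF u du, (forall y, is_derive F y (dF y)) ->
            is_derive u x du -> is_derive (fun t => F (u t)) x (du * dF (u x))).
  { intros F dF u du HF Hu. apply (is_derive_comp F u); auto. }
  assert (Hexp := Comp exp exp (fun t => - Re (w t)) _ is_derive_exp (is_derive_opp _ _ _ Hre)).
  assert (Hcos := Comp cos (fun y => - sin y) (fun t => - Im (w t)) _ is_derive_cos (is_derive_opp _ _ _ Him)).
  assert (Hsin := Comp sin cos (fun t => - Im (w t)) _ is_derive_sin (is_derive_opp _ _ _ Him)).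
  unfold Hdirac, Cexp; simpl; unfold Re, Im in *; simpl in *.
  split.
  - eapply is_derive_eq; [apply (is_derive_mult (fun t => exp _) (fun t => cos _)); eauto; intros; apply Rmult_comm|].
    unfold opp, mult, plus; simpl. ring.
  - eapply is_derive_eq; [apply (is_derive_mult (fun t => exp _) (fun t => sin _)); eauto; intros; apply Rmult_comm|].
    unfold opp, mult, plus; simpl. ring.
Qed.

Lemma is_derive_locally_zero (f : R -> C) (x : R) (l : C) :
  locally x (fun t => f t = RtoC 0) -> is_derive f x l -> l = RtoC 0.
Proof.
  intros Hzero Hf. apply (is_derive_ext_loc f (fun _ => RtoC 0)) in Hf; [|exact Hzero].
  apply is_derive_C in Hf as [Hre Him]. simpl in Hre, Him.
  apply is_derive_unique in Hre, Him. rewrite Derive_const in Hre, Him.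
  destruct l as [a b]. simpl in *. now rewrite <- Hre, <- Him.
Qed.

Lemma Cmult_integral (a b : C) : (a * b)%C = RtoC 0 -> a = RtoC 0 \/ b = RtoC 0.
Proof.
  intros Hab. destruct (classic (a = RtoC 0)) as [Ha | Ha]; [now left | right].
  apply NNPP. intros Hb. exact (Cmult_neq_0 a b Ha Hb Hab).
Qed.

Lemma Hdirac_neq_0 (z : C) : Hdirac z <> RtoC 0.
Proof.
  unfold Hdirac, Cexp. intros H. injection H as Hcos Hsin.
  pose proof (exp_pos (- fst z)). pose proof (sin2_cos2 (- snd z)) as Hpyth.
  apply Rmult_integral in Hcos as [Hcos | Hcos]; [lra|].
  apply Rmult_integral in Hsin as [Hsin | Hsin]; [lra|].
  rewrite Hcos, Hsin in Hpyth. unfold Rsqr in Hpyth. lra.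
Qed.

Definition Qform (a b X Y : C) : C := (X * X - a * X * Y + b * Y * Y)%C.

Lemma Phi_Qform (H : C -> C) (alpha beta t : R) (w : C) :
  Phi H alpha beta t w =
  Qform alpha beta ((w + t) * (w + t)) (RtoC t * RtoC t * (H w * H w)).
Proof. unfold Phi, Qform. rewrite !RtoC_pow. ring. Qed.

Lemma Qform_factor (a b X0 Y0 X Y : C) :
  (X0 * X0 * Qform a b X Y - X * X * Qform a b X0 Y0)%C =
  ((Y * X0 - Y0 * X) * (b * (Y * X0 + Y0 * X) - a * X * X0))%C.
Proof. unfold Qform. ring. Qed.

(* If (X0, Y0) is a root whose ratio is a double root of b r^2 - a r + 1
   (i.e. 2 b Y0 = a X0), then every root (X, Y) of Q has the same ratio. *)
Lemma Qform_double_root (a b X0 Y0 X Y : C) :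
  X0 <> RtoC 0 -> Qform a b X0 Y0 = RtoC 0 -> (RtoC 2 * b * Y0 = a * X0)%C ->
  Qform a b X Y = RtoC 0 -> (Y * X0 = Y0 * X)%C.
Proof.
  intros HX0 HQ0 Hdouble HQ.
  set (D := (Y * X0 - Y0 * X)%C).
  assert (HDN : (D * (b * (Y * X0 + Y0 * X) - a * X * X0))%C = RtoC 0).
  { unfold D. rewrite <- Qform_factor, HQ, HQ0. ring. }
  assert (Hsquare : (b * X0 * (D * D))%C = RtoC 0).
  { transitivity (X0 * (D * (b * (Y * X0 + Y0 * X) - a * X * X0))
                  - D * X * X0 * (RtoC 2 * b * Y0 - a * X0))%C.
    - unfold D. ring.
    - rewrite HDN, Hdouble. ring. }
  assert (Hb : b <> RtoC 0).
  { intros Hb. rewrite Hb in Hdouble.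
    assert (Ha : (a * X0)%C = RtoC 0) by (rewrite <- Hdouble; ring).
    destruct (Cmult_integral _ _ Ha) as [Ha0 | Ha0]; [|contradiction].
    apply (Cmult_neq_0 X0 X0 HX0 HX0). rewrite <- HQ0. unfold Qform. rewrite Ha0, Hb. ring. }
  apply Ceq_minus. fold D.
  destruct (Cmult_integral _ _ Hsquare) as [H0 | H0].
  - destruct (Cmult_integral _ _ H0); contradiction.
  - now destruct (Cmult_integral _ _ H0).
Qed.

(* Either the root
   ratio at t0 is double, and the branch keeps this ratio, or it is simple, and
   then D * N = 0 near t0 with D t0 = 0, N t0 <> 0 forces D'(t0) = 0. *)
Lemma Qform_branch_stationary (a b : C) (t0 : R) (X Y : R -> C) (dX dY : C) :
  is_derive X t0 dX -> is_derive Y t0 dY -> X t0 <> RtoC 0 ->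
  locally t0 (fun t => Qform a b (X t) (Y t) = RtoC 0) ->
  (dY * X t0 = Y t0 * dX)%C.
Proof.
  intros HdX HdY HX0 Hbranch.
  set (X0 := X t0) in *. set (Y0 := Y t0).
  set (D := fun t => (Y t * X0 - Y0 * X t)%C).
  set (N := fun t => (b * (Y t * X0 + Y0 * X t) - a * X t * X0)%C).
  assert (HQ0 : Qform a b X0 Y0 = RtoC 0) by exact (locally_singleton _ _ Hbranch).
  assert (HdD : is_derive D t0 (dY * X0 - Y0 * dX)%C).
  { unfold D. apply is_derive_Cminus.
    - exact (is_derive_Cmult_const_r _ _ _ _ HdY).
    - exact (is_derive_Cmult_const_l _ _ _ _ HdX). }
  apply Ceq_minus.
  destruct (classic ((RtoC 2 * b * Y0 - a * X0)%C = RtoC 0)) as [Hdouble | Hsimple].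
  -
    apply (is_derive_locally_zero D t0); [|exact HdD].
    eapply filter_imp; [|exact Hbranch]. intros t HQ. apply (Ceq_minus (Y t * X0)).
    apply (Qform_double_root a b X0 Y0); auto. now apply Ceq_minus.
  -
    assert (HN0 : N t0 <> RtoC 0).
    { replace (N t0) with (X0 * (RtoC 2 * b * Y0 - a * X0))%C by (unfold N, X0, Y0; ring).
      now apply Cmult_neq_0. }
    assert (HdN : is_derive N t0 (b * (dY * X0 + Y0 * dX) - a * dX * X0)%C).
    { unfold N. apply is_derive_Cminus.
      - apply is_derive_Cmult_const_l, is_derive_Cplus.
        + exact (is_derive_Cmult_const_r _ _ _ _ HdY).
        + exact (is_derive_Cmult_const_l _ _ _ _ HdX).
      - apply is_derive_Cmult_const_r, is_derive_Cmult_const_l, HdX. }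
    assert (HDN : locally t0 (fun t => (D t * N t)%C = RtoC 0)).
    { eapply filter_imp; [|exact Hbranch]. intros t HQ.
      unfold D, N. rewrite <- Qform_factor, HQ, HQ0. ring. }
    pose proof (is_derive_locally_zero _ _ _ HDN (is_derive_Cmult _ _ _ _ _ HdD HdN)) as Hzero.
    replace (D t0) with (RtoC 0) in Hzero by (unfold D, X0, Y0; ring).
    rewrite Cmult_0_l, Cplus_0_r in Hzero.
    destruct (Cmult_integral _ _ Hzero); [assumption | contradiction].
Qed.

(* For the Dirac kernel, a differentiable branch of roots w of Phi through w0,
   with w0 + t0 <> 0, moves at rate w'(t0) = w0 / (t0 (w0 + t0 + 1)): this is the
   stationarity of t^2 e^(-2w) / (w + t)^2, after cancelling the nonzero factors. *)
Lemma Dirac_branch_rate (alpha beta t0 : R) (w : R -> C) (dw : C) :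
  t0 <> 0 -> (w t0 + RtoC t0)%C <> RtoC 0 ->
  locally t0 (fun t => Phi Hdirac alpha beta t (w t) = RtoC 0) ->
  is_derive w t0 dw ->
  w t0 = (RtoC t0 * dw * (w t0 + RtoC t0 + RtoC 1))%C.
Proof.
  intros Ht0 Hshift Hbranch Hdw.
  set (w0 := w t0) in *. set (E0 := Hdirac w0).
  assert (Hid : is_derive (fun t => RtoC t) t0 (RtoC 1))
    by exact (is_derive_RtoC _ _ _ (@is_derive_id R_AbsRing t0)).
  assert (Hsum : is_derive (fun t => (w t + RtoC t)%C) t0 (dw + RtoC 1)%C)
    by (apply is_derive_Cplus; assumption).
  assert (HE : is_derive (fun t => Hdirac (w t)) t0 (- E0 * dw)%C) by now apply is_derive_Hdirac.
  pose proof (Qform_branch_stationary alpha beta t0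
    (fun t => (w t + RtoC t) * (w t + RtoC t))%C
    (fun t => RtoC t * RtoC t * (Hdirac (w t) * Hdirac (w t)))%C _ _
    (is_derive_Cmult _ _ _ _ _ Hsum Hsum)
    (is_derive_Cmult _ _ _ _ _ (is_derive_Cmult _ _ _ _ _ Hid Hid) (is_derive_Cmult _ _ _ _ _ HE HE))
    (Cmult_neq_0 _ _ Hshift Hshift)) as Hstationary.
  assert (Hfactor : (RtoC 2 * RtoC t0 * (E0 * E0) * (w0 + RtoC t0)
                      * (w0 - RtoC t0 * dw * (w0 + RtoC t0 + RtoC 1)))%C = RtoC 0).
  { apply Ceq_minus in Hstationary.
    - rewrite <- Hstationary. unfold E0, w0. simpl. ring.
    - eapply filter_imp; [|exact Hbranch]. intros t Ht. rewrite <- Phi_Qform. exact Ht. }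
  assert (Hnz : (RtoC 2 * RtoC t0 * (E0 * E0) * (w0 + RtoC t0))%C <> RtoC 0).
  { assert (HR : forall r, r <> 0 -> RtoC r <> RtoC 0)
      by (intros r Hr H; now apply RtoC_inj in H).
    repeat apply Cmult_neq_0; try apply HR; try lra; try apply Hdirac_neq_0; assumption. }
  apply Ceq_minus.
  destruct (Cmult_integral _ _ Hfactor); [contradiction | assumption].
Qed.

Lemma Re_rate_at_imaginary_root (t0 omega : R) (d : C) :
  0 < t0 -> (0, omega) = (RtoC t0 * d * ((0, omega) + RtoC t0 + RtoC 1))%C ->
  Re d = omega ^ 2 / (t0 * ((1 + t0) ^ 2 + omega ^ 2)).
Proof.
  destruct d as [x y]. intros Ht0 Hrate. simpl.
  pose proof (f_equal fst Hrate) as Hre. pose proof (f_equal snd Hrate) as Him.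
  simpl in Hre, Him.
  assert (Hden : 0 < t0 * ((1 + t0) ^ 2 + omega ^ 2)).
  { apply Rmult_lt_0_compat; [lra | nra]. }
  apply (Rmult_eq_reg_r (t0 * ((1 + t0) ^ 2 + omega ^ 2))); [|lra].
  unfold Rdiv. rewrite Rmult_assoc, Rinv_l, Rmult_1_r by lra.
  apply (f_equal (Rmult (1 + t0))) in Hre. apply (f_equal (Rmult omega)) in Him.
  lra.
Qed.

Theorem mainTheorem6 (alpha beta tau0 omega : R) :
  0 < tau0 -> 0 < omega ->
  simple_root (Phi Hdirac alpha beta tau0) (0, omega) ->
  forall (w : R -> C) (dw : C),
    w tau0 = (0, omega) ->
    locally tau0 (fun t => Phi Hdirac alpha beta t (w t) = 0) ->
    is_derive w tau0 dw ->
    Re dw = omega ^ 2 / (tau0 * ((1 + tau0) ^ 2 + omega ^ 2)) /\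
    0 < omega ^ 2 / (tau0 * ((1 + tau0) ^ 2 + omega ^ 2)).
Proof.
  intros Htau0 Homega _ w dw Hw0 Hbranch Hdw.
  assert (Hshift : (w tau0 + RtoC tau0)%C <> RtoC 0).
  { rewrite Hw0. intros H. injection H. lra. }
  pose proof (Dirac_branch_rate alpha beta tau0 w dw ltac:(lra) Hshift Hbranch Hdw) as Hrate.
  rewrite Hw0 in Hrate.
  split.
  - exact (Re_rate_at_imaginary_root tau0 omega dw Htau0 Hrate).
  - apply Rdiv_lt_0_compat; [nra |].
    apply Rmult_lt_0_compat; [lra | nra].
Qed.
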